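(* Let $K\in\mathbb{N}$, $L>0$, and let $p$ be a probability density function on $\mathbb{R}^K$ that is $L$-Lipschitz continuous with respect to the $\ell_1$-norm. Then for all $\mathbf{x}\in\mathbb{R}^K$, \[ p(\mathbf{x})\le\Big(\frac{L^K(K+1)!}{2^K}\Big)^{\frac1{K+1}}. \] *)

From mathcomp Require Import all_boot all_order all_algebra.
From mathcomp Require Import all_classical all_reals all_analysis.
Set Implicit Arguments. Unset Strict Implicit. Unset Printing Implicit Defensive.
Import Order.TTheory GRing.Theory Num.Theory.
Local Open Scope ring_scope.
Local Open Scope ereal_scope.

(* Integral over R^K (vectors 'rV[R]_K) with respect to K-dimensional Lebesgue
   measure, written as the iterated one-dimensional Lebesgue integral
   (by Tonelli this is the K-dim Lebesgue integral for nonnegative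
   measurable, e.g. continuous, integrands).  For K = 0, R^0 is a point of
   mass 1. *)
Fixpoint iint {R : realType} (K : nat) : ('rV[R]_K -> \bar R) -> \bar R :=
  match K return ('rV[R]_K -> \bar R) -> \bar R with
  | 0 => fun f => f 0%R
  | K'.+1 => fun f =>
      \int[@lebesgue_measure R]_(t in setT)
        iint (fun v : 'rV[R]_K' => f (row_mx (t%:M : 'M[R]_1) v))
  end.

Definition norm1 {R : realType} {K : nat} (x : 'rV[R]_K) : R :=
  (\sum_(i < K) `|x 0 i|)%R.

Definition is_pdf {R : realType} (K : nat) (p : 'rV[R]_K -> R) : Prop :=
  (forall x, 0 <= p x)%R /\ iint (fun x => (p x)%:E) = 1.

Definition lipschitz_l1 {R : realType} (K : nat) (L : R) (p : 'rV[R]_K -> R) : Prop :=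
  forall x y, (`|p x - p y| <= L * norm1 (x - y))%R.

From mathcomp Require Import all_boot all_order all_algebra.
From mathcomp Require Import all_classical all_reals all_analysis.
From mathcomp Require Import measurable_realfun ring lra.
Import Order.TTheory GRing.Theory Num.Theory.
Local Open Scope ring_scope.

(* By Lipschitz continuity the cone v |-> max (p x - L |v - x|_1, 0) lies below
   the graph of p.  Integrating one coordinate at a time, the n-th power of a
   cone of height c in K variables has integral 2^K n! c^(n+K) / (L^K (n+K)!),
   so for n = 1 the total mass 1 of p is at least 2^K p(x)^(K+1) / (L^K (K+1)!). *)

Section Cone.
Context {R : realType}.
Local Notation mu := (@lebesgue_measure R).

Lemma integral_horner_derive (Q : {poly R}) a b : a < b ->
  (\int[mu]_(t in `[a, b]) (Q^`().[t])%:E = (Q.[b] - Q.[a])%:E)%E.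
Proof.
move=> ab; rewrite EFinB.
have LRcontinuous_horner (P : {poly R}) : derivable_oo_LRcontinuous (horner P) a b.
  split.
  - by move=> t _; exact: derivable_horner.
  - by apply: cvg_at_right_filter; exact: continuous_horner.
  - by apply: cvg_at_left_filter; exact: continuous_horner.
apply: continuous_FTC2 => //.
- exact/derivable_oo_LRcontinuous_within/LRcontinuous_horner.
- by move=> t _; rewrite -derivE.
Qed.

Lemma integral_affine_pow (A k b0 : R) m a b : k != 0 -> a < b ->
  (\int[mu]_(t in `[a, b]) (A * (k * t + b0) ^+ m)%:E =
   (A * ((k * b + b0) ^+ m.+1 - (k * a + b0) ^+ m.+1) / (k * m.+1%:R))%:E)%E.
Proof.
move=> k0 ab; have m1 : 1 + m%:R != 0 :> R by rewrite addrC natr1 pnatr_eq0.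
pose Q : {poly R} := (A / (k * m.+1%:R)) *: (k *: 'X + b0%:P) ^+ m.+1.
transitivity (\int[mu]_(t in `[a, b]) (Q^`().[t])%:E)%E.
  apply: eq_integral => t _.
  rewrite /Q derivZ deriv_exp derivD derivZ derivX derivC !hornerE hornerMn !hornerE /=.
  by rewrite -mulr_natr; congr EFin; field; rewrite k0 m1.
by rewrite integral_horner_derive // /Q !hornerE; congr EFin; field; rewrite k0 m1.
Qed.

(* No measurability is needed: a nonnegative integral is the supremum of the
   integrals of the simple functions below the integrand. *)
Lemma le_integralT_ge0 (f g : R -> \bar R) :
  (forall t, (0 <= f t)%E) -> (forall t, (f t <= g t)%E) ->
  (\int[mu]_(t in setT) f t <= \int[mu]_(t in setT) g t)%E.
Proof.
move=> f0 fg; have g0 t : (0 <= g t)%E := le_trans (f0 t) (fg t).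
rewrite !ge0_integralTE //.
by apply: ereal_sup_le => _ [h hf <-]; exists h => //= t; exact: le_trans (fg t).
Qed.

Lemma iint_ge0 K (f : 'rV[R]_K -> \bar R) : (forall v, 0 <= f v)%E -> (0 <= iint f)%E.
Proof.
elim: K f => [|K IH] f f0 /=; first exact: f0.
by apply: integral_ge0 => t _; exact: IH.
Qed.

Lemma iint_le K (f g : 'rV[R]_K -> \bar R) :
  (forall v, 0 <= f v)%E -> (forall v, f v <= g v)%E -> (iint f <= iint g)%E.
Proof.
elim: K f g => [|K IH] f g f0 fg /=; first exact: fg.
by apply: le_integralT_ge0 => t; [exact: iint_ge0 | exact: IH].
Qed.

Lemma norm1_row_mx m n (a : 'rV[R]_m) (b : 'rV[R]_n) :
  norm1 (row_mx a b) = norm1 a + norm1 b.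
Proof.
rewrite /norm1 big_split_ord /=.
by congr (_ + _); apply: eq_bigr => i _; rewrite (row_mxEl, row_mxEr).
Qed.

Lemma norm1_distrC n (a b : 'rV[R]_n) : norm1 (a - b) = norm1 (b - a).
Proof. by apply: eq_bigr => i _; rewrite !mxE distrC. Qed.

Lemma norm1_row_mx_sub K (t : R) (v : 'rV[R]_K) (x : 'rV[R]_(1 + K)) :
  norm1 (row_mx (t%:M : 'M[R]_1) v - x) = `|t - lsubmx x 0 0| + norm1 (v - rsubmx x).
Proof.
rewrite -{1}(hsubmxK x) opp_row_mx add_row_mx norm1_row_mx; congr (_ + _).
by rewrite /norm1 big_ord1 !mxE /= mulr1n.
Qed.

Definition cone (L c r : R) : R := Num.max (c - L * r) 0.

Lemma cone_ge0 L c r : 0 <= cone L c r.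
Proof. by rewrite /cone le_max lexx orbT. Qed.

Lemma coneD L c r s : cone L c (r + s) = cone L (c - L * r) s.
Proof. by rewrite /cone mulrDr opprD addrA. Qed.

Lemma measurable_cone_pow (A L c x0 : R) m :
  measurable_fun [set: R] (EFin \o (fun t => A * cone L c `|t - x0| ^+ m)).
Proof.
apply/measurable_EFinP; apply: measurable_funM => //; apply: measurable_funX.
apply: measurable_maxr => //; apply: measurable_funB => //.
apply: measurable_funM => //.
by apply: measurableT_comp => //; exact: measurable_funB.
Qed.

Lemma integral_cone_pow_right (A L c x0 : R) m : 0 < L -> 0 < c ->
  (\int[mu]_(t in `[x0, (x0 + c / L)%R]) (A * cone L c `|t - x0| ^+ m)%:E =
   (A * c ^+ m.+1 / (L * m.+1%:R))%:E)%E.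
Proof.
move=> L0 c0; have Lc : L * (c / L) = c by rewrite mulrC divfK ?gt_eqF.
transitivity
  (\int[mu]_(t in `[x0, (x0 + c / L)%R]) (A * (- L * t + (c + L * x0)) ^+ m)%:E)%E.
  apply: eq_integral => t; rewrite inE /= in_itv /= => /andP[xt tx].
  rewrite /cone ger0_norm ?subr_ge0 // max_l; first by congr (_ * _ ^+ _)%:E; ring.
  by rewrite subr_ge0 -[leRHS]Lc ler_pM2l // lerBlDl.
rewrite integral_affine_pow ?oppr_eq0 ?gt_eqF ?ltrDl ?divr_gt0 //.
rewrite (_ : - L * (x0 + c / L) + (c + L * x0) = 0); last by rewrite mulrDr !mulNr Lc; ring.
rewrite (_ : - L * x0 + (c + L * x0) = c); last by ring.
congr EFin; rewrite expr0n /= sub0r; field.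
by rewrite addrC natr1 pnatr_eq0 (gt_eqF L0).
Qed.

Lemma integral_cone_pow_left (A L c x0 : R) m : 0 < L -> 0 < c ->
  (\int[mu]_(t in `[(x0 - c / L)%R, x0]) (A * cone L c `|t - x0| ^+ m)%:E =
   (A * c ^+ m.+1 / (L * m.+1%:R))%:E)%E.
Proof.
move=> L0 c0; have Lc : L * (c / L) = c by rewrite mulrC divfK ?gt_eqF.
transitivity
  (\int[mu]_(t in `[(x0 - c / L)%R, x0]) (A * (L * t + (c - L * x0)) ^+ m)%:E)%E.
  apply: eq_integral => t; rewrite inE /= in_itv /= => /andP[xt tx].
  rewrite /cone ler0_norm ?subr_le0 // max_l; first by congr (_ * _ ^+ _)%:E; ring.
  by rewrite subr_ge0 -[leRHS]Lc ler_pM2l // opprB lerBlDl -lerBlDr.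
rewrite integral_affine_pow ?gt_eqF ?ltrBlDr ?ltrDl ?divr_gt0 //.
rewrite (_ : L * (x0 - c / L) + (c - L * x0) = 0); last by rewrite mulrBr Lc; ring.
rewrite (_ : L * x0 + (c - L * x0) = c); last by ring.
congr EFin; rewrite expr0n /= subr0; field.
by rewrite addrC natr1 pnatr_eq0 (gt_eqF L0).
Qed.

Lemma integral_cone_pow_ge (A L c x0 : R) m : 0 < L -> 0 <= A ->
  ((A * 2 * Num.max c 0 ^+ m.+1 / (L * m.+1%:R))%:E <=
   \int[mu]_(t in setT) (A * cone L c `|t - x0| ^+ m)%:E)%E.
Proof.
move=> L0 A0.
have f0 t : (0 <= (A * cone L c `|t - x0| ^+ m)%:E)%E.
  by rewrite lee_fin mulr_ge0 ?exprn_ge0 ?cone_ge0.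
have [c0|c0] := leP c 0.
  by rewrite expr0n mulr0 mul0r; apply: integral_ge0 => t _; exact: f0.
have mf := measurable_cone_pow A L c x0 m.
rewrite (_ : A * 2 * _ / _ = A * c ^+ m.+1 / (L * m.+1%:R) + A * c ^+ m.+1 / (L * m.+1%:R));
  last by ring.
rewrite EFinD -[X in (X + _)%E](integral_cone_pow_left A L c x0 m L0 c0).
rewrite -(integral_cone_pow_right A L c x0 m L0 c0).
rewrite -integral_itv_bndo_bndc; last exact: measurable_funS mf.
rewrite -ge0_integral_setU //=; first last.
- apply/disj_setPS => t [] /=; rewrite !in_itv /= => /andP[_ h1] /andP[h2 _].
  by move: (lt_le_trans h1 h2); rewrite ltxx.
- exact: measurable_funS mf.
by apply: ge0_subset_integral => //=; exact: measurableU.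
Qed.

Lemma iint_cone_pow_ge (L : R) K n c (x : 'rV[R]_K) : 0 < L ->
  ((2 ^+ K * n`!%:R / (L ^+ K * (n + K)`!%:R) * Num.max c 0 ^+ (n + K))%:E <=
   iint (fun v => (cone L c (norm1 (v - x)) ^+ n)%:E))%E.
Proof.
move=> L0; elim: K n c x => [|K IH] n c x /=.
  by rewrite /cone /norm1 big_ord0 mulr0 subr0 addn0 !expr0 !mul1r divff ?mul1r //.
set A := 2 ^+ K * n`!%:R / (L ^+ K * (n + K)`!%:R).
have A0 : 0 <= A by rewrite divr_ge0 // mulr_ge0 // ?exprn_ge0 // ltW.
set x0 := lsubmx (x : 'rV_(1 + K)) 0 0.
(* In the last K coordinates the integrand is a cone of height c - L |t - x0|. *)
rewrite (_ : 2 ^+ K.+1 * n`!%:R / (L ^+ K.+1 * (n + K.+1)`!%:R) * Num.max c 0 ^+ (n + K.+1)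
  = A * 2 * Num.max c 0 ^+ (n + K).+1 / (L * (n + K).+1%:R)); last first.
  rewrite /A addnS factS natrM !exprS; field.
  by rewrite -natrD addrC natr1 !pnatr_eq0 /= -lt0n fact_gt0 expf_neq0 ?(gt_eqF L0).
apply: le_trans (integral_cone_pow_ge A L c x0 (n + K) L0 A0) _.
apply: le_integralT_ge0 => t.
  by rewrite lee_fin mulr_ge0 ?exprn_ge0 ?cone_ge0.
apply: le_trans (IH n (c - L * `|t - x0|) (rsubmx (x : 'rV_(1 + K)))) _.
apply: iint_le => v; first by rewrite lee_fin exprn_ge0 ?cone_ge0.
by rewrite norm1_row_mx_sub coneD.
Qed.

Lemma lipschitz_l1_cone_le K (L : R) (p : 'rV[R]_K -> R) x v :
  lipschitz_l1 L p -> (forall y, 0 <= p y) -> cone L (p x) (norm1 (v - x)) <= p v.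
Proof.
move=> lip p0; rewrite /cone ge_max p0 andbT norm1_distrC.
by have := lip x v; have := ler_norm (p x - p v); lra.
Qed.

Lemma le_root_powR (a b : R) n : 0 <= a -> a ^+ n.+1 <= b -> a <= b `^ (n.+1%:R)^-1.
Proof.
move=> a0 ab; have b0 : 0 <= b by apply: le_trans ab; exact: exprn_ge0.
have -> : a = (a ^+ n.+1) `^ (n.+1%:R)^-1.
  by rewrite -powR_mulrn // -powRrM mulfV ?powRr1 // pnatr_eq0.
by apply: ge0_ler_powR; rewrite ?nnegrE ?invr_ge0 ?exprn_ge0.
Qed.

End Cone.

Theorem lemma4 (R : realType) (K : nat) (L : R) (p : 'rV[R]_K -> R) :
  0 < L -> is_pdf p -> lipschitz_l1 L p ->
  forall x : 'rV[R]_K,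
    p x <= ((L ^+ K * (K.+1)`!%:R / 2 ^+ K) `^ (K.+1%:R)^-1)%R.
Proof.
move=> L0 [p0 p1] lip x.
have cone_le1 : (iint (fun v => (cone L (p x) (norm1 (v - x)) ^+ 1)%:E) <= 1)%E.
  by rewrite -p1; apply: iint_le => v; rewrite lee_fin expr1 ?cone_ge0 ?lipschitz_l1_cone_le.
have := le_trans (iint_cone_pow_ge L _ 1 (p x) x L0) cone_le1.
rewrite lee_fin max_l // add1n mulr1 => bound.
apply: le_root_powR => //.
have C0 : 0 < 2 ^+ K / (L ^+ K * (K.+1)`!%:R) :> R.
  by rewrite divr_gt0 ?mulr_gt0 ?exprn_gt0 ?ltr0n ?fact_gt0.
by rewrite -invf_div -(ler_pM2l C0) mulfV ?gt_eqF.
Qed.
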